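(* Let $n=2k+1$ be odd and let $B$ be an $n\times n$ ASM. Then there exist $n\times n$ permutation matrices $P_1,\ldots,P_k,P_{k+2},\ldots,P_n$ such that $[P_1,\ldots,P_k,B,P_{k+2},\ldots,P_n]$ (with $B$ as the $(k+1)$-st horizontal plane) is an $n\times n\times n$ ASHM.
   Context: An $n\times n$ alternating sign matrix (ASM) is an $n\times n$ matrix with entries in $\{0,1,-1\}$ such that in every row and column the nonzeros alternate in sign, beginning and ending with $+1$. An $n\times n\times n$ hypermatrix $[A_1,\ldots,A_n]$ ($A_s$ the horizontal planes) is an ASHM if all entries are in $\{0,\pm1\}$ and in every line (obtained by fixing two of the three indices) the nonzeros alternate in sign beginning and ending with $+1$. *)

From HB Require Import structures.
From mathcomp Require Import all_boot all_order all_algebra all_fingroup.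
Set Implicit Arguments. Unset Strict Implicit. Unset Printing Implicit Defensive.
Import GRing.Theory Num.Theory.
Local Open Scope ring_scope.

(* A finite sequence of integers is "alternating sign": all entries are in
   {0,1,-1} and the nonzero entries, read in order, are +1,-1,+1,...,-1,+1
   (alternate in sign, begin and end with +1; in particular nonempty). *)
Definition alt_sign (s : seq int) : bool :=
  let t := [seq x <- s | x != 0] in
  [&& all (fun x => x \in [:: 0; 1; -1]) s,
      odd (size t) &
      t == [seq (-1) ^+ i | i <- iota 0 (size t)]].

Definition line n (f : 'I_n -> int) : seq int := [seq f j | j <- enum 'I_n].

Definition is_ASM n (A : 'M[int]_n) : bool :=
  [forall i : 'I_n, alt_sign (line (fun j => A i j))] &&
  [forall j : 'I_n, alt_sign (line (fun i => A i j))].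

(* An n x n x n hypermatrix, H s i j = entry (i,j) of the s-th horizontal plane A_s. *)
Definition hypermatrix n := 'I_n -> 'I_n -> 'I_n -> int.

Definition is_ASHM n (H : hypermatrix n) : bool :=
  [forall s : 'I_n, forall i : 'I_n, alt_sign (line (fun j => H s i j))] &&
  [forall s : 'I_n, forall j : 'I_n, alt_sign (line (fun i => H s i j))] &&
  [forall i : 'I_n, forall j : 'I_n, alt_sign (line (fun s => H s i j))].

(* Let n = 2k+1 and let Z and D be the 0/1 indicator matrices of the zero and
   of the -1 entries of B.  Every row and column of B sums to 1, so each line
   of Z + 2D sums to n - 1 = 2k; in particular the lines of Z have even sums.
   An even bipartite multigraph can be split in two halves with exactly half
   of the degree at every vertex, so Z = F + (Z - F) with F and Z - F having
   equal line sums.  Then U = D + F and L = D + (Z - F) have all line sums k,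
   and by Hall's theorem (Koenig's theorem) each is a sum of k permutation
   matrices.  Put the permutation matrices of U below B and those of L above
   it.  Along a vertical line through (i, j) the nonzero entries then read
   1 (if B i j = 1), 1 -1 1 (if B i j = -1, since D i j = 1 contributes one 1
   on each side) or a single 1 on one side (if B i j = 0). *)

From HB Require Import structures.
From mathcomp Require Import all_boot all_order all_algebra all_fingroup.
From mathcomp Require Import zify.
Set Implicit Arguments. Unset Strict Implicit. Unset Printing Implicit Defensive.

(** * Line sums of nonnegative integer matrices *)

Lemma sum_pred1 (I : finType) (a : I) : \sum_i (i == a : nat) = 1.
Proof. by rewrite (bigD1 a) //= eqxx big1 // => i /negbTE ->. Qed.

Section LineSums.
Variable n : nat.
Implicit Types (E F : 'I_n -> 'I_n -> nat) (a b i j : 'I_n).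

Definition row_sum E i := \sum_j E i j.
Definition col_sum E j := \sum_i E i j.
Definition mass E := \sum_i row_sum E i.
Definition delta a b : 'I_n -> 'I_n -> nat := fun i j => (i == a) && (j == b).

Lemma eq_row_sum E F : E =2 F -> row_sum E =1 row_sum F.
Proof. by move=> eEF i; apply: eq_bigr => j _. Qed.

Lemma eq_col_sum E F : E =2 F -> col_sum E =1 col_sum F.
Proof. by move=> eEF j; apply: eq_bigr => i _. Qed.

Lemma eq_mass E F : E =2 F -> mass E = mass F.
Proof. by move=> eEF; apply: eq_bigr => i _; apply: eq_row_sum. Qed.

Lemma row_sumD E F i :
  row_sum (fun i j => E i j + F i j) i = row_sum E i + row_sum F i.
Proof. exact: big_split. Qed.

Lemma col_sumD E F j :
  col_sum (fun i j => E i j + F i j) j = col_sum E j + col_sum F j.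
Proof. exact: big_split. Qed.

Lemma massD E F : mass (fun i j => E i j + F i j) = mass E + mass F.
Proof. by rewrite /mass -big_split; apply: eq_bigr => i _; apply: row_sumD. Qed.

Lemma row_sum_delta a b i : row_sum (delta a b) i = (i == a).
Proof.
rewrite /row_sum /delta; have [_|_] := eqVneq i a; last by rewrite big1.
exact: sum_pred1.
Qed.

Lemma col_sum_delta a b j : col_sum (delta a b) j = (j == b).
Proof.
rewrite /col_sum /delta; have [_|_] := eqVneq j b.
  by rewrite (eq_bigr (fun i => i == a : nat)) ?sum_pred1 // => i _; rewrite andbT.
by rewrite big1 // => i _; rewrite andbF.
Qed.

Lemma mass_delta a b : mass (delta a b) = 1.
Proof.
by rewrite /mass -(sum_pred1 a); apply: eq_bigr => i _; apply: row_sum_delta.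
Qed.

Lemma leq_row_sum E i j : E i j <= row_sum E i.
Proof. by rewrite /row_sum (bigD1 j) //= leq_addr. Qed.

Lemma leq_mass E i j : E i j <= mass E.
Proof.
by rewrite /mass (bigD1 i) //=; apply: leq_trans (leq_row_sum E i j) (leq_addr _ _).
Qed.

End LineSums.

(** * Halving a matrix with even line sums *)

Lemma even_sum_second (I : finType) (f : I -> nat) a :
  0 < f a -> 2 %| \sum_i f i -> exists b, (b == a : nat) < f b.
Proof.
move=> fa even_f; have [b lt_b|no_lt] := pickP (fun b => (b == a : nat) < f b).
  by exists b.
suff sum_f : \sum_i f i = 1 by rewrite sum_f in even_f.
rewrite -(sum_pred1 a); apply: eq_bigr => b _; apply/eqP.
by rewrite eqn_leq leqNgt no_lt /=; have [->|] := eqVneq b a.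
Qed.

Section Halving.
Variable n : nat.
Implicit Types (E F : 'I_n -> 'I_n -> nat) (r c : 'I_n).

Definition even_lines E :=
  (forall i, 2 %| row_sum E i) /\ (forall j, 2 %| col_sum E j).

Definition halves F E := [/\ forall i j, F i j <= E i j,
  forall i, 2 * row_sum F i = row_sum E i & forall j, 2 * col_sum F j = col_sum E j].

Definition halving_reduction E' E := [/\ mass E' + 2 = mass E, even_lines E' &
  forall F', halves F' E' -> exists F, halves F E].

Lemma halves0 E : E =2 (fun _ _ => 0) -> halves (fun _ _ => 0) E.
Proof.
move=> E0; split=> // [i|j].
  by rewrite (eq_row_sum E0) /row_sum big1.
by rewrite (eq_col_sum E0) /col_sum big1.
Qed.

Lemma halves_double E E' F' r c :
    E =2 (fun i j => E' i j + (delta r c i j + delta r c i j)) ->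
  halves F' E' -> halves (fun i j => F' i j + delta r c i j) E.
Proof.
move=> defE [le_F' row_F' col_F']; split=> [i j|i|j].
- by have := le_F' i j; have := defE i j; lia.
- rewrite row_sumD (eq_row_sum defE) !row_sumD row_sum_delta; have := row_F' i; lia.
- rewrite col_sumD (eq_col_sum defE) !col_sumD col_sum_delta; have := col_F' j; lia.
Qed.

(* E' is E with the path r1 c1 r2 c2 replaced by the single entry r1 c2.  A
   halving of E' is lifted by putting r1 c1 and r2 c2 on the side of r1 c2,
   and r2 c1 on the other side. *)
Lemma halves_shortcut E E' F' r1 r2 c1 c2 : r1 != r2 ->
    (fun i j => E i j + delta r1 c2 i j) =2
    (fun i j => E' i j + (delta r1 c1 i j + delta r2 c1 i j + delta r2 c2 i j)) ->
  halves F' E' -> exists F, halves F E.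
Proof.
move=> r12 defE [le_F' row_F' col_F'].
have rowE i : row_sum E i + (i == r1) =
              row_sum E' i + ((i == r1) + (i == r2) + (i == r2)).
  by have := eq_row_sum defE i; rewrite !row_sumD !row_sum_delta.
have colE j : col_sum E j + (j == c2) =
              col_sum E' j + ((j == c1) + (j == c1) + (j == c2)).
  by have := eq_col_sum defE j; rewrite !col_sumD !col_sum_delta.
have [F'0|F'pos] := posnP (F' r1 c2).
  exists (fun i j => F' i j + delta r2 c1 i j); split=> [i j|i|j].
  - have := defE i j; have := le_F' i j; rewrite /delta /=.
    have [-> /=|_] := eqVneq i r1; last by lia.
    by rewrite eq_sym (negbTE r12) /=; have [->|] := eqVneq j c2; rewrite ?F'0; lia.
  - by rewrite row_sumD row_sum_delta; have := rowE i; have := row_F' i; lia.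
  - by rewrite col_sumD col_sum_delta; have := colE j; have := col_F' j; lia.
pose F i j := F' i j + delta r1 c1 i j + delta r2 c2 i j - delta r1 c2 i j.
have defF : (fun i j => F i j + delta r1 c2 i j) =2
            (fun i j => F' i j + delta r1 c1 i j + delta r2 c2 i j).
  move=> i j /=; rewrite /F subnK // /delta.
  by have [->|] := eqVneq i r1; have [->|] := eqVneq j c2; rewrite //=; lia.
have rowF i := eq_row_sum defF i; have colF j := eq_col_sum defF j.
exists F; split=> [i j|i|j].
- by have := defF i j; have := defE i j; have := le_F' i j; lia.
- have := rowF i; rewrite !row_sumD !row_sum_delta.
  by have := rowE i; have := row_F' i; lia.
- have := colF j; rewrite !col_sumD !col_sum_delta.
  by have := colE j; have := col_F' j; lia.
Qed.

Lemma halving_reduction_double E r c :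
  1 < E r c -> even_lines E -> exists E', halving_reduction E' E.
Proof.
move=> Erc [evenR evenC].
pose E' i j := E i j - (delta r c i j + delta r c i j).
have defE : E =2 (fun i j => E' i j + (delta r c i j + delta r c i j)).
  move=> i j; rewrite /E' subnK // /delta.
  by have [->|] := eqVneq i r; have [->|] := eqVneq j c.
exists E'; split.
- by rewrite (eq_mass defE) !massD mass_delta.
- split=> [i|j].
    by have := evenR i; rewrite (eq_row_sum defE) !row_sumD row_sum_delta; lia.
  by have := evenC j; rewrite (eq_col_sum defE) !col_sumD col_sum_delta; lia.
by move=> F' /(halves_double defE) halvesF; eexists; apply: halvesF.
Qed.

Lemma halving_reduction_path E r1 r2 c1 c2 : r1 != r2 ->
    0 < E r1 c1 -> 0 < E r2 c1 -> (c2 == c1 : nat) < E r2 c2 -> even_lines E ->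
  exists E', halving_reduction E' E.
Proof.
move=> r12 E11 E21 E22 [evenR evenC].
pose S i j := delta r1 c1 i j + delta r2 c1 i j + delta r2 c2 i j.
have le_SE i j : S i j <= E i j.
  rewrite /S /delta; have [->|_] := eqVneq i r1.
    by rewrite (negbTE r12) /=; have [->|] := eqVneq j c1.
  have [->|_] := eqVneq i r2; last by [].
  rewrite /=; have [->|] := eqVneq j c2; last by have [->|] := eqVneq j c1.
  by move: E22; have [->|] := eqVneq c2 c1.
pose E' i j := E i j + delta r1 c2 i j - S i j.
have defE : (fun i j => E i j + delta r1 c2 i j) =2 (fun i j => E' i j + S i j).
  by move=> i j; rewrite /E' subnK // (leq_trans (le_SE i j)) ?leq_addr.
exists E'; split; last by move=> F'; apply: halves_shortcut r12 defE.
- by have := eq_mass defE; rewrite !massD !mass_delta; lia.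
split=> [i|j].
  have := eq_row_sum defE i; rewrite !row_sumD !row_sum_delta.
  by have := evenR i; lia.
have := eq_col_sum defE j; rewrite !col_sumD !col_sum_delta.
by have := evenC j; lia.
Qed.

Lemma halving_reduction_exists E r1 c1 :
  0 < E r1 c1 -> even_lines E -> exists E', halving_reduction E' E.
Proof.
move=> E11 evenE; have [evenR evenC] := evenE.
have [r2] := even_sum_second E11 (evenC c1).
have [->|r21 E21] := eqVneq r2 r1; first by move/halving_reduction_double; apply.
have [c2 E22] := even_sum_second E21 (evenR r2).
by apply: halving_reduction_path E11 E21 E22 evenE; rewrite eq_sym.
Qed.

Lemma even_lines_halves E : even_lines E -> exists F, halves F E.
Proof.
move: {2}(mass E) (leqnn (mass E)) => m; elim: m E => [|m IHm] E le_Em evenE;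
  have [[r c] /= Erc|E0] := pickP (fun p : 'I_n * 'I_n => 0 < E p.1 p.2);
  try by exists (fun _ _ => 0); apply: halves0 => i j; have /negbT := E0 (i, j);
         rewrite lt0n negbK => /eqP.
  by have := leq_mass E r c; lia.
have [E' [massE' evenE' liftE']] := halving_reduction_exists Erc evenE.
have [|F' halvesF'] := IHm E' _ evenE'; first by lia.
exact: liftE' halvesF'.
Qed.

End Halving.

(** * Hall's marriage theorem and the Birkhoff-Koenig decomposition *)

Section Hall.
Variables (T T' : finType).
Implicit Types (R : T -> T' -> bool) (A S : {set T}) (Y : {set T'}).

Definition neighbours R S : {set T'} := [set y | [exists x in S, R x y]].

Definition hall_condition R A :=
  forall S, S \subset A -> #|S| <= #|neighbours R S|.

Definition matching R A (f : T -> T') :=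
  {in A &, injective f} /\ {in A, forall x, R x (f x)}.

Definition avoiding R Y x y := R x y && (y \notin Y).

Lemma neighboursP R S y : reflect (exists2 x, x \in S & R x y) (y \in neighbours R S).
Proof. by rewrite inE; apply: (iffP exists_inP) => -[x]; exists x. Qed.

Lemma neighbours_avoiding R Y S :
  neighbours R S \subset Y :|: neighbours (avoiding R Y) S.
Proof.
apply/subsetP => y /neighboursP [x xS Rxy]; rewrite inE.
have [//|yY /=] := boolP (y \in Y).
by apply/neighboursP; exists x; rewrite // /avoiding Rxy.
Qed.

Lemma matching_glue R A S Y f g :
    {in S, forall x, f x \in Y} -> matching R S f ->
    matching (avoiding R Y) (A :\: S) g ->
  matching R A (fun x => if x \in S then f x else g x).
Proof.
move=> fY [inj_f Rf] [inj_g Rg]; have gD x : x \in A -> x \notin S -> x \in A :\: S.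
  by rewrite inE => -> ->.
have gY x : x \in A -> x \notin S -> g x \notin Y.
  by move=> xA xS; case/andP: (Rg x (gD x xA xS)).
split=> [x y xA yA /=|x xA /=].
  case: (boolP (x \in S)) => xS; case: (boolP (y \in S)) => yS.
  - exact: inj_f.
  - by move=> fxy; case/negP: (gY y yA yS); rewrite -fxy fY.
  - by move=> gxy; case/negP: (gY x xA xS); rewrite gxy fY.
  - by apply: inj_g; apply: gD.
by case: (boolP (x \in S)) => xS; [apply: Rf | case/andP: (Rg x (gD x xA xS))].
Qed.

Lemma hall_condition_tight R A S0 :
    hall_condition R A -> S0 \subset A -> #|neighbours R S0| <= #|S0| ->
  hall_condition (avoiding R (neighbours R S0)) (A :\: S0).
Proof.
move=> hallA sS0A tight S sS.
have SS0 : S :&: S0 = set0.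
  apply/setP => x; rewrite !inE; apply/negbTE/andP => -[xS xS0].
  by move/subsetP: sS => /(_ x xS); rewrite inE xS0.
have sUA : S :|: S0 \subset A by rewrite subUset sS0A (subset_trans sS) ?subsetDl.
have sN : neighbours R (S :|: S0) \subset
          neighbours R S0 :|: neighbours (avoiding R (neighbours R S0)) S.
  apply/subsetP => y /neighboursP [x]; rewrite in_setU => xSS0 Rxy; rewrite in_setU.
  case: (boolP (y \in neighbours R S0)) => //= yN; apply/neighboursP; exists x.
    by case/orP: xSS0 => // xS0; case/negP: yN; apply/neighboursP; exists x.
  by rewrite /avoiding Rxy yN.
have := hallA _ sUA; rewrite cardsU SS0 cards0 subn0.
have := subset_leq_card sN; have := (leq_card_setU (neighbours R S0)
  (neighbours (avoiding R (neighbours R S0)) S)).1.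
lia.
Qed.

Lemma hall_condition_loose R A a b :
    (forall S, S \subset A -> S != set0 -> S != A -> #|S| < #|neighbours R S|) ->
    a \in A ->
  hall_condition (avoiding R [set b]) (A :\ a).
Proof.
move=> strict aA S sS; have [->|Snz] := eqVneq S set0; first by rewrite cards0.
have sSA : S \subset A := subset_trans sS (subsetDl A [set a]).
have SA : S != A.
  by apply: contraTneq sS => ->; apply/subsetPn; exists a; rewrite // !inE eqxx.
have := strict S sSA Snz SA; have := subset_leq_card (neighbours_avoiding R [set b] S).
have := (leq_card_setU [set b] (neighbours (avoiding R [set b]) S)).1.
by rewrite cards1; lia.
Qed.

(* Halmos-Vaughan: if some nonempty proper S0 has no surplus of neighbours,
   match S0 and A :\: S0 (away from the neighbours of S0) separately;
   otherwise match any a to any neighbour b and the rest of A away from b. *)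
Theorem hall_marriage (y0 : T') R A :
  hall_condition R A -> exists f, matching R A f.
Proof.
move: {2}#|A| (leqnn #|A|) => m; elim: m R A => [|m IHm] R A leAm hallA;
  have [->|[a aA]] := set_0Vmem A; try by exists (fun=> y0); split=> x; rewrite inE.
  have : 0 < #|A| by apply/card_gt0P; exists a.
  by rewrite ltnNge leAm.
pose tight S0 := [&& S0 \subset A, S0 != set0, S0 != A & #|neighbours R S0| <= #|S0|].
have [S0 /and4P [sS0A S0nz S0A tightS0] | loose] := pickP tight.
  have [|f matchf] := IHm R S0 _ (fun S sS => hallA S (subset_trans sS sS0A)).
    have : S0 \proper A by rewrite properEneq S0A sS0A.
    by move/proper_card; lia.
  have [|g matchg] := IHm _ (A :\: S0) _ (hall_condition_tight hallA sS0A tightS0).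
    have := cardsD A S0; rewrite (setIidPr sS0A); have := card_gt0 S0; rewrite S0nz.
    by have := subset_leq_card sS0A; lia.
  have fN x : x \in S0 -> f x \in neighbours R S0.
    by move=> xS0; apply/neighboursP; exists x => //; apply: matchf.2.
  by exists (fun x => if x \in S0 then f x else g x); apply: matching_glue fN matchf matchg.
have [b] : exists b, b \in neighbours R [set a].
  by apply/card_gt0P; apply: leq_trans (hallA _ _); rewrite ?cards1 ?sub1set.
move=> /neighboursP [_ /set1P -> Rab].
have strict S : S \subset A -> S != set0 -> S != A -> #|S| < #|neighbours R S|.
  by move=> sSA Snz SA; have := loose S; rewrite /tight sSA Snz SA /= ltnNge => ->.
have [|g matchg] := IHm _ (A :\ a) _ (hall_condition_loose b strict aA).
  by have := cardsD1 a A; rewrite aA; lia.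
exists (fun x => if x \in [set a] then b else g x); apply: matching_glue matchg.
- by move=> x _; apply: set11.
split=> [x y /set1P -> /set1P -> //|x /set1P -> //].
Qed.

End Hall.

Section Birkhoff.
Variable n : nat.
Implicit Types (U : 'I_n -> 'I_n -> nat) (s : 'S_n).

Definition regular k U := (forall i, row_sum U i = k) /\ (forall j, col_sum U j = k).

Definition perm_nmx s : 'I_n -> 'I_n -> nat := fun i j => s i == j.

Lemma regular_perm_nmx s : regular 1 (perm_nmx s).
Proof.
split=> [i|j].
  by rewrite -(sum_pred1 (s i)); apply: eq_bigr => j _; rewrite /perm_nmx eq_sym.
rewrite -(sum_pred1 (s^-1 j)%g); apply: eq_bigr => i _.
by rewrite /perm_nmx -{1}(permKV s j) (inj_eq perm_inj).
Qed.

Lemma regular_hall_condition k U :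
  regular k.+1 U -> hall_condition (fun i j => 0 < U i j) setT.
Proof.
move=> [rowU colU] S _; set N := neighbours _ S.
rewrite -(leq_pmul2r (ltn0Sn k)).
have -> : #|S| * k.+1 = \sum_(i in S) \sum_(j in N) U i j.
  rewrite -sum_nat_const; apply: eq_bigr => i iS; rewrite -(rowU i) /row_sum.
  rewrite [LHS](bigID (mem N)) /= [X in _ + X]big1 ?addn0 // => j jN.
  by apply/eqP; rewrite -leqn0 leqNgt; apply: contra jN => Uij; apply/neighboursP; exists i.
have -> : #|N| * k.+1 = \sum_i \sum_(j in N) U i j.
  by rewrite exchange_big -sum_nat_const; apply: eq_bigr => j _; rewrite -(colU j).
by rewrite [X in _ <= X](bigID (mem S)) /= leq_addr.
Qed.

Lemma regular_perm_support k U :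
  regular k.+1 U -> exists s, forall i, 0 < U i (s i).
Proof.
move=> regU; have [y0 _|empty] := pickP 'I_n; last by exists 1%g => i; have := empty i.
have [f [inj_f Uf]] := hall_marriage y0 (regular_hall_condition regU).
have inj_f' : injective f by move=> x y; apply: inj_f; rewrite inE.
by exists (perm inj_f') => i; rewrite permE; apply: Uf; rewrite inE.
Qed.

Lemma regular_perm_decomposition k U : regular k U ->
  exists Qs : seq 'S_n, size Qs = k /\ forall i j, U i j = count (fun s => s i == j) Qs.
Proof.
elim: k U => [|k IHk] U regU.
  by exists [::]; split=> // i j; have := leq_row_sum U i j; rewrite regU.1 leqn0 => /eqP.
have [s Us] := regular_perm_support regU.
pose U' i j := U i j - perm_nmx s i j.
have defU : U =2 (fun i j => U' i j + perm_nmx s i j).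
  by move=> i j; rewrite /U' subnK // /perm_nmx; have [<-|] := eqVneq (s i) j.
have [Qs [sizeQs defU']] : exists Qs : seq 'S_n,
    size Qs = k /\ forall i j, U' i j = count (fun s => s i == j) Qs.
  apply: IHk; have [rowP colP] := regular_perm_nmx s; case: regU => [rowU colU].
  split=> [i|j].
    by have := eq_row_sum defU i; rewrite row_sumD rowU rowP; lia.
  by have := eq_col_sum defU j; rewrite col_sumD colU colP; lia.
by exists (s :: Qs); split=> [|i j]; rewrite /= ?sizeQs // defU defU' addnC.
Qed.

End Birkhoff.

(** * Alternating sign sequences *)

Import GRing.Theory.
Local Open Scope ring_scope.

Definition is_trit (x : int) : bool := x \in [:: 0; 1; -1].

Lemma alt_signE s :
  alt_sign s = all is_trit s && alt_sign [seq x <- s | x != 0].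
Proof.
rewrite /alt_sign filter_id all_filter -/(all is_trit s).
have [ha|] //= := boolP (all is_trit s).
by rewrite (sub_all _ ha) // => x xt; apply/implyP.
Qed.

Lemma alt_sign_trits s : alt_sign s -> all is_trit s.
Proof. by case/and3P. Qed.

Lemma sum_alt_signs m : \sum_(i <- iota 0 m.*2.+1) (-1 : int) ^+ i = 1.
Proof.
elim: m => [|m IH]; first by rewrite big_seq1 expr0.
rewrite doubleS -addn2 iotaD big_cat IH add0n /= !big_cons big_nil.
by rewrite (exprS _ m.*2.+1) mulN1r addr0 addrN addr0.
Qed.

Lemma alt_sign_sum s : alt_sign s -> \sum_(x <- s) x = 1.
Proof.
case/and3P => _ odd_t /eqP def_t.
rewrite (bigID (fun x => x != 0)) /= [X in _ + X]big1 ?addr0; last first.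
  by move=> x /negbNE /eqP.
rewrite -big_filter def_t big_map -(odd_double_half (size _)) odd_t.
exact: sum_alt_signs.
Qed.

Lemma filter_indicator (T : Type) (b : pred T) (xs : seq T) :
  [seq x <- [seq (b y)%:R | y <- xs] | x != 0 :> int] = nseq (count b xs) 1.
Proof. by elim: xs => //= y xs ->; case: (b y). Qed.

Lemma all_trit_indicator (T : Type) (b : pred T) (xs : seq T) :
  all is_trit [seq (b y)%:R | y <- xs].
Proof. by elim: xs => //= y xs ->; case: (b y). Qed.

Lemma alt_sign_indicator (T : Type) (b : pred T) (xs : seq T) :
  count b xs = 1%N -> alt_sign [seq (b y)%:R | y <- xs].
Proof. by rewrite alt_signE all_trit_indicator filter_indicator => ->. Qed.

Lemma alt_sign_indicator_cat (T : Type) (b c : pred T) (xs ys : seq T) x :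
  alt_sign ([seq (b y)%:R | y <- xs] ++ x :: [seq (c y)%:R | y <- ys]) =
  alt_sign (nseq (count b xs) 1 ++ x :: nseq (count c ys) 1).
Proof.
rewrite [LHS]alt_signE [RHS]alt_signE !filter_cat /= !filter_indicator.
by rewrite !filter_nseq !mul1n !all_cat /= !all_trit_indicator !all_nseq !orbT.
Qed.

Lemma line_trit n (f : 'I_n -> int) j : alt_sign (line f) -> is_trit (f j).
Proof. by move/alt_sign_trits/allP; apply; apply: map_f; rewrite mem_enum. Qed.

Lemma line_sum n (f : 'I_n -> int) : \sum_(x <- line f) x = \sum_j f j.
Proof. by rewrite big_map big_enum. Qed.

Lemma alt_sign_line_count n (f : 'I_n -> int) : alt_sign (line f) ->
  (\sum_j (f j == 0%R : nat) + 2 * \sum_j (f j == (-1)%R : nat) = n.-1)%N.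
Proof.
move=> alt_f; have sum_f := alt_sign_sum alt_f; rewrite line_sum in sum_f.
have fsign j : f j = (f j == 1)%:R - (f j == -1)%:R.
  by move: (line_trit j alt_f); rewrite /is_trit !inE => /or3P [] /eqP ->.
have card3 : (\sum_j (f j == 0%R : nat) + \sum_j (f j == 1%R : nat) +
              \sum_j (f j == (-1)%R : nat) = n)%N.
  rewrite -!big_split /= -[n in RHS]card_ord -sum1_card; apply: eq_bigr => j _.
  by move: (line_trit j alt_f); rewrite /is_trit !inE => /or3P [] /eqP ->.
have : (\sum_j (f j == 1%R : nat))%N%:R - (\sum_j (f j == (-1)%R : nat))%N%:R = 1 :> int.
  rewrite !natr_sum -sumrB -[X in _ = X]sum_f.
  by apply: eq_bigr => j _; rewrite -fsign.
by rewrite !natz; lia.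
Qed.

Lemma asm_split k (B : 'M[int]_(2 * k + 1)) : is_ASM B ->
  exists U L : 'I_(2 * k + 1) -> 'I_(2 * k + 1) -> nat,
    [/\ regular k U, regular k L &
        forall i j, alt_sign (nseq (U i j) 1 ++ B i j :: nseq (L i j) 1)].
Proof.
case/andP => /forallP rowB /forallP colB.
pose Z i j := (B i j == 0 : nat); pose D i j := (B i j == -1 : nat).
have rowZD i : (row_sum Z i + 2 * row_sum D i = 2 * k)%N.
  by rewrite (alt_sign_line_count (rowB i)) addn1.
have colZD j : (col_sum Z j + 2 * col_sum D j = 2 * k)%N.
  by rewrite (alt_sign_line_count (colB j)) addn1.
have [F [le_FZ rowF colF]] : exists F, halves F Z.
  by apply: even_lines_halves; split=> [i|j]; [have := rowZD i | have := colZD j]; lia.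
have defZ : Z =2 (fun i j => Z i j - F i j + F i j)%N by move=> i j; rewrite subnK.
(* U and L count the 1s below and above the plane of B along each vertical
   line: a -1 of B needs a 1 on both sides, a 0 of B a 1 on exactly one. *)
exists (fun i j => D i j + F i j)%N, (fun i j => D i j + (Z i j - F i j))%N.
split; first split=> [i|j].
- by rewrite row_sumD; have := rowZD i; have := rowF i; lia.
- by rewrite col_sumD; have := colZD j; have := colF j; lia.
- split=> [i|j].
    rewrite row_sumD; have := eq_row_sum defZ i; rewrite row_sumD.
    by have := rowZD i; have := rowF i; lia.
  rewrite col_sumD; have := eq_col_sum defZ j; rewrite col_sumD.
  by have := colZD j; have := colF j; lia.
move=> i j; have := le_FZ i j; rewrite /Z /D.
move: (line_trit j (rowB i)); rewrite /is_trit !inE => /or3P [] /eqP ->.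
- by case: (F i j) => [|[|]].
- by rewrite leqn0 => /eqP ->.
- by rewrite leqn0 => /eqP ->.
Qed.

Lemma line_stack (T : Type) k (x : int) (g : T -> int) (x0 : T) (Ls Us : seq T) :
    size Ls = k -> size Us = k ->
  line (fun s : 'I_(2 * k + 1) => if s == k :> nat then x
          else g (if (s < k)%N then nth x0 Ls s else nth x0 Us (s - k.+1)))
  = map g Ls ++ x :: map g Us.
Proof.
move=> sizeLs sizeUs.
pose h m := if m == k then x
  else g (if (m < k)%N then nth x0 Ls m else nth x0 Us (m - k.+1)).
have mapE (s : seq T) : map g s = [seq g (nth x0 s a) | a <- iota 0 (size s)].
  by rewrite (map_comp g (nth x0 s)) map_nth_iota0 ?take_size.
rewrite /line -[X in X = _]/(map (h \o val) (enum 'I_(2 * k + 1))).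
rewrite map_comp val_enum_ord.
rewrite (_ : 2 * k + 1 = k + k.+1)%N; last by lia.
rewrite iotaD map_cat /= add0n (_ : h k = x); last by rewrite /h eqxx.
rewrite (mapE Ls) (mapE Us) sizeLs sizeUs; congr (_ ++ _ :: _).
  apply/eq_in_map => a; rewrite mem_iota add0n => /andP [_ lt_ak].
  by rewrite /h ltn_eqF ?lt_ak.
have -> : iota k.+1 k = map (addn k.+1) (iota 0 k) by rewrite -iotaDl addn0.
by rewrite -map_comp; apply/eq_map => a; rewrite /= /h !ifF ?addKn //; lia.
Qed.

Lemma perm_mxE n (s : 'S_n) i j : (perm_mx s : 'M[int]_n) i j = (s i == j)%:R.
Proof. by rewrite !mxE. Qed.

Lemma alt_sign_perm_row n (s : 'S_n) i :
  alt_sign (line (fun j => (perm_mx s : 'M[int]_n) i j)).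
Proof.
rewrite /line; under eq_map do rewrite perm_mxE.
apply: alt_sign_indicator; rewrite (eq_count (a2 := pred1 (s i))) => [|j].
  by rewrite count_uniq_mem ?enum_uniq // mem_enum.
by rewrite /= eq_sym.
Qed.

Lemma alt_sign_perm_col n (s : 'S_n) j :
  alt_sign (line (fun i => (perm_mx s : 'M[int]_n) i j)).
Proof.
rewrite /line; under eq_map do rewrite perm_mxE.
apply: alt_sign_indicator; rewrite (eq_count (a2 := pred1 (s^-1 j)%g)) => [|i].
  by rewrite count_uniq_mem ?enum_uniq // mem_enum.
by rewrite /= -{1}(permKV s j) (inj_eq perm_inj).
Qed.

Theorem mainTheorem17 (k : nat) (B : 'M[int]_(2 * k + 1)) :
  is_ASM B ->
  exists P : 'I_(2 * k + 1) -> 'M[int]_(2 * k + 1),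
    (forall s : 'I_(2 * k + 1), (s != k :> nat) -> is_perm_mx (P s)) /\
    is_ASHM (fun s i j => if (s == k :> nat) then B i j else P s i j).
Proof.
move=> asmB; have [U [L [regU regL altUL]]] := asm_split asmB.
have [Ls [sizeLs defU]] := regular_perm_decomposition regU.
have [Us [sizeUs defL]] := regular_perm_decomposition regL.
exists (fun s => perm_mx (if (s < k)%N then nth 1%g Ls s else nth 1%g Us (s - k.+1))).
split=> [s _|]; first exact: perm_mx_is_perm.
case/andP: asmB => /forallP rowB /forallP colB.
apply/andP; split; [apply/andP; split|]; apply/'forall_forallP => x y.
- by case: (x == k :> nat); [apply: rowB | apply: alt_sign_perm_row].
- by case: (x == k :> nat); [apply: colB | apply: alt_sign_perm_col].
rewrite (line_stack (B x y) (fun Q : 'S__ => (perm_mx Q : 'M[int]__) x y) _ sizeLs sizeUs).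
under eq_map do rewrite perm_mxE; under [X in _ ++ _ :: X]eq_map do rewrite perm_mxE.
by rewrite alt_sign_indicator_cat -defU -defL.
Qed.
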